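(* Let $\boldsymbol{Y}_t$ be an $n\times 1$ vector of observed variables generated by the structural vector moving average model $$\boldsymbol{Y}_t=\sum_{j=0}^{\infty}\boldsymbol{\Theta}_j\boldsymbol{\varepsilon}_{t-j},$$ where $\boldsymbol{\varepsilon}_t=(\varepsilon_{1,t},\dots,\varepsilon_{m,t})'$ is an $m\times1$ vector of unobserved structural shocks with $E[\boldsymbol{\varepsilon}_t]=0$, $E[\boldsymbol{\varepsilon}_t\boldsymbol{\varepsilon}_t']>0$ and mutually uncorrelated components, and each $\boldsymbol{\Theta}_h$ is an $n\times m$ matrix. Let $x_t$ be the first element and $y_t$ the last element of $\boldsymbol{Y}_t$, let $\theta_{h,xs}$ and $\theta_{h,ys}$ denote the $(1,s)$-th and $(n,s)$-th elements of $\boldsymbol{\Theta}_h$. Fix $1\le S\le m$ and let $\xi_t=\sum_{s=1}^S\varepsilon_{s,t}$. Let $z_t$ be a random variable satisfying: (i) $E[z_t\xi_t]\neq0$; (ii) $E[z_t\varepsilon_{s,t}]=0$ for all $s=S+1,\dots,m$; (iii) $E[z_t\boldsymbol{\varepsilon}_{t+j}]=0$ for all $j\ne0$. Write $\alpha_s=E[z_t\varepsilon_{s,t}]$. For $h\ge0$ define $\widetilde{y}_{t+h}=\sum_{j=0}^h y_{t+j}$, $\widetilde{x}_{t+h}=\sum_{j=0}^h x_{t+j}$, $\widetilde{\theta}_{h,ys}=\sum_{j=0}^h\theta_{j,ys}$ and $\widetilde{\theta}_{h,xs}=\sum_{j=0}^h\theta_{j,xs}$. Suppose $\widetilde{\theta}_{h,xs}\neq0$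 for all $s=1,\dots,S$. Then for every $h=0,1,2,\dots$ such that $Cov(\widetilde{x}_{t+h},z_t)\neq 0$, $$\widetilde{\beta}_h\equiv\frac{Cov(\widetilde{y}_{t+h},z_t)}{Cov(\widetilde{x}_{t+h},z_t)}=\sum_{s=1}^S\left(\frac{\alpha_s\widetilde{\theta}_{h,xs}}{\sum_{s'=1}^S\alpha_{s'}\widetilde{\theta}_{h,xs'}}\right)\frac{\widetilde{\theta}_{h,ys}}{\widetilde{\theta}_{h,xs}}.$$
   Context: All moments involved are assumed finite and the moving average series is assumed to converge so that covariances can be computed term by term. *)

From HB Require Import structures.
From mathcomp Require Import all_boot all_order all_algebra.
From mathcomp Require Import all_classical all_reals all_analysis.
Set Implicit Arguments. Unset Strict Implicit. Unset Printing Implicit Defensive.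
Import Order.TTheory GRing.Theory Num.Theory.
Local Open Scope ring_scope.

Definition cumtheta (R : realType) (n m : nat) (Theta : nat -> 'M[R]_(n, m))
  (h : nat) (i : 'I_n) (s : 'I_m) : R :=
  \sum_(j < h.+1) Theta j i s.

Definition cumvar (T : Type) (R : realType) (w : int -> T -> R) (t : int) (h : nat)
  : T -> R := fun omega => \sum_(j < h.+1) w (t + (j : nat)%:Z) omega.

Definition shock_cov d (T : measurableType d) (R : realType) (P : probability T R)
  (m : nat) (eps : 'I_m -> int -> T -> R) (u : int) : 'M[R]_m :=
  \matrix_(i, j) fine ('E_P[fun omega => (eps i u omega * eps j u omega)%R])%E.

Definition posdef (R : realType) (m : nat) (A : 'M[R]_m) : Prop :=
  forall v : 'cV[R]_m, v != 0 -> 0 < (v^T *m A *m v) ord0 ord0.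

From HB Require Import structures.
From mathcomp Require Import all_boot all_order all_algebra.
From mathcomp Require Import all_classical all_reals all_analysis.
Set Implicit Arguments. Unset Strict Implicit. Unset Printing Implicit Defensive.
Import Order.TTheory GRing.Theory Num.Theory.
Import numFieldTopology.Exports numFieldNormedType.Exports.
Local Open Scope classical_set_scope.
Local Open Scope ring_scope.

(* By (iii) the shock eps_{t+h-j} is correlated with z_t only when j = h, so
   the term-by-term covariance of the MA(oo) series for y_{t+h} collapses to
   the single term sum_s theta_{h,ys} alpha_s, and (ii) kills s > S.  Summing
   over horizons 0..h gives Cov(y~_{t+h}, z_t) = sum_{s<=S} alpha_s theta~_{h,ys},
   likewise for x~, and the ratio is rearranged as a weighted average of the
   ratios theta~_{h,ys} / theta~_{h,xs}. *)

Section covariance_linearity.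
Variables (d : measure_display) (T : measurableType d) (R : realType).
Variable P : probability T R.

Lemma covariance_suml k (X : 'I_k -> T -> R) (Z : T -> R) :
  (forall j, X j \in Lfun P 2%:E) -> Z \in Lfun P 2%:E ->
  covariance P (fun w => \sum_(j < k) X j w) Z = (\sum_(j < k) covariance P (X j) Z)%E.
Proof.
elim: k X => [|k IH] X HX HZ.
  rewrite big_ord0 (_ : (fun w => _) = cst 0); last by apply/funext => w; rewrite big_ord0.
  exact: covariance_cst_l.
rewrite big_ord_recr /= -IH //.
rewrite (_ : (fun w => _) =
    (fun w => \sum_(j < k) X (widen_ord (leqnSn k) j) w) \+ X ord_max)%R;
  last by apply/funext => w; rewrite big_ord_recr.
rewrite covarianceDl //.
rewrite (_ : (fun w => _) = \sum_(j < k) X (widen_ord (leqnSn k) j)); last by rewrite fct_sumE.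
have le12 : (1 <= 2%:E :> \bar R)%E by rewrite lee1n.
by apply: rpred_sum => j _.
Qed.

Lemma covariance_centered_l (X Z : T -> R) : X \in Lfun P 2%:E -> Z \in Lfun P 2%:E ->
  ('E_P[X] = 0)%E -> covariance P X Z = ('E_P[fun w => (Z w * X w)%R])%E.
Proof.
move=> HX HZ EX0.
have Pfin : P setT \is a fin_num := fin_num_measure P _ measurableT.
rewrite covarianceE; first last.
- exact: Lfun2_mul_Lfun1.
- exact: Lfun_subset12.
- exact: Lfun_subset12.
by rewrite EX0 mul0e sube0; congr expectation; apply/funext => w /=; rewrite mulrC.
Qed.

End covariance_linearity.

Lemma series_single_term (R : realType) (f : nat -> R) (j0 : nat) (l : R) :
  (fun N => \sum_(j < N) f j) @ \oo --> l ->
  (forall j, j != j0 -> f j = 0) -> l = f j0.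
Proof.
move=> fl f0; apply: norm_cvg_unique fl _; apply: cvg_near_cst.
exists j0.+1 => // N /= ltj0N.
rewrite (bigD1 (Ordinal ltj0N)) //= big1 ?addr0 // => j ne_j_j0.
by apply: f0; apply: contra ne_j_j0 => /eqP eq_j_j0; apply/eqP/val_inj.
Qed.

Lemma weighted_ratio_sum (F : fieldType) (I : finType) (A : pred I) (a b c : I -> F) :
  (forall i, A i -> c i != 0) ->
  (\sum_(i | A i) a i * b i) / (\sum_(i | A i) a i * c i) =
  \sum_(i | A i) (a i * c i / \sum_(j | A j) a j * c j) * (b i / c i).
Proof.
move=> c_neq0; rewrite mulr_suml; apply: eq_bigr => i Ai.
set D := \sum_(j | A j) _.
rewrite mulf_div [a i * c i]mulrC -mulrA [D * _]mulrC invfM !mulrA.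
by rewrite -(mulrA (c i)) [c i * _]mulrC mulfK ?c_neq0.
Qed.

Section local_projection.
Variables (d : measure_display) (T : measurableType d) (R : realType).
Variables (P : probability T R) (n m S : nat) (Theta : nat -> 'M[R]_(n, m)).
Variables (eps : 'I_m -> int -> T -> R) (Y : 'I_n -> int -> T -> R).
Variables (z : T -> R) (t : int).

Hypothesis eps_L2 : forall s u, eps s u \in Lfun P 2%:E.
Hypothesis Y_L2 : forall i u, Y i u \in Lfun P 2%:E.
Hypothesis z_L2 : z \in Lfun P 2%:E.
Hypothesis eps_centered : forall s u, ('E_P[eps s u] = 0)%E.
Hypothesis covariance_termwise : forall i u,
  (fun N => \sum_(j < N) \sum_(s < m)
      Theta j i s * fine (covariance P (eps s (u - (j : nat)%:Z)) z))
    @ \oo --> fine (covariance P (Y i u) z).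
Hypothesis z_exogenous : forall s : 'I_m, (S <= s)%N ->
  ('E_P[fun w => (z w * eps s t w)%R] = 0)%E.
Hypothesis z_contemporaneous : forall (j : int) (s : 'I_m), j != 0 ->
  ('E_P[fun w => (z w * eps s (t + j) w)%R] = 0)%E.

Definition instrument_loading s := fine ('E_P[fun w => (z w * eps s t w)%R])%E.

Lemma covariance_shock_instrument s u :
  fine (covariance P (eps s u) z) = if u == t then instrument_loading s else 0.
Proof.
rewrite covariance_centered_l //; case: eqP => [-> //|/eqP ne_u_t].
by rewrite -[u](addrNK t) addrC z_contemporaneous // subr_eq0.
Qed.

Lemma covariance_response_instrument i (h : nat) :
  fine (covariance P (Y i (t + h%:Z)) z) = \sum_(s < m) Theta h i s * instrument_loading s.
Proof.
pose F j := \sum_(s < m) Theta j i s * fine (covariance P (eps s (t + h%:Z - j%:Z)) z).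
rewrite (series_single_term (f := F) (j0 := h) (@covariance_termwise i (t + h%:Z))).
  by rewrite /F; apply: eq_bigr => s _; rewrite addrK covariance_shock_instrument eqxx.
move=> j ne_j_h; apply: big1 => s _ /=.
rewrite covariance_shock_instrument ifF ?mulr0 //.
apply: contra_neqF ne_j_h.
by rewrite -addrA -{2}[t]addr0 (inj_eq (addrI t)) subr_eq0 => /eqP [->].
Qed.

Lemma covariance_cumvar_instrument i h :
  fine (covariance P (cumvar (Y i) t h) z) =
  \sum_(s < m | (s < S)%N) instrument_loading s * cumtheta Theta h i s.
Proof.
have Pfin : P setT \is a fin_num := fin_num_measure P _ measurableT.
rewrite /cumvar covariance_suml // -sum_fine; last first.
  move=> j _; apply: covariance_fin_num; try exact: Lfun_subset12.
  exact: Lfun2_mul_Lfun1.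
under eq_bigr do rewrite covariance_response_instrument.
rewrite exchange_big /= [RHS]big_mkcond /=; apply: eq_bigr => s _.
case: ltnP => [_ | le_S_s].
  by rewrite /cumtheta mulr_sumr; apply: eq_bigr => j _; rewrite mulrC.
by rewrite big1 // => j _; rewrite /instrument_loading z_exogenous ?mulr0.
Qed.

End local_projection.

Theorem corollary1 (d : measure_display) (T : measurableType d) (R : realType)
  (P : probability T R) (n m S : nat)
  (Theta : nat -> 'M[R]_(n.+1, m))
  (eps : 'I_m -> int -> T -> R)
  (Y : 'I_n.+1 -> int -> T -> R)
  (z : T -> R) (t : int) :
  (1 <= S <= m)%N ->
  (* finite second moments *)
  (forall s u, eps s u \in Lfun P 2%:E) ->
  (forall i u, Y i u \in Lfun P 2%:E) ->
  z \in Lfun P 2%:E ->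
  (* structural shocks: mean zero, positive definite E[eps eps'], uncorrelated *)
  (forall s u, ('E_P[eps s u] = 0)%E) ->
  (forall u, posdef (shock_cov P eps u)) ->
  (forall u (s s' : 'I_m), s != s' ->
     ('E_P[fun w => (eps s u w * eps s' u w)%R] = 0)%E) ->
  (* SVMA model Y_u = sum_j Theta_j eps_{u-j} (series converging a.s.) *)
  (forall i u, {ae P, forall w,
     (fun N => \sum_(j < N) \sum_(s < m) Theta j i s * eps s (u - (j : nat)%:Z) w)
       @ \oo --> Y i u w}) ->
  (* standing assumption: covariances with z computed term by term *)
  (forall i u,
     (fun N => \sum_(j < N) \sum_(s < m)
         Theta j i s * fine (covariance P (eps s (u - (j : nat)%:Z)) z))
       @ \oo --> fine (covariance P (Y i u) z)) ->
  (* instrument conditions *)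
  (* (i) *) ('E_P[fun w => (z w * \sum_(s < m | (s < S)%N) eps s t w)%R] != 0)%E ->
  (* (ii) *) (forall s : 'I_m, (S <= s)%N -> ('E_P[fun w => (z w * eps s t w)%R] = 0)%E) ->
  (* (iii) *) (forall (j : int) (s : 'I_m), j != 0 ->
                 ('E_P[fun w => (z w * eps s (t + j) w)%R] = 0)%E) ->
  forall h : nat,
    (forall s : 'I_m, (s < S)%N -> cumtheta Theta h ord0 s != 0) ->
    covariance P (cumvar (Y ord0) t h) z != 0%E ->
    let alpha := fun s : 'I_m => fine ('E_P[fun w => (z w * eps s t w)%R])%E in
    fine (covariance P (cumvar (Y ord_max) t h) z)
      / fine (covariance P (cumvar (Y ord0) t h) z)
    = \sum_(s < m | (s < S)%N)
        (alpha s * cumtheta Theta h ord0 s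
           / \sum_(s' < m | (s' < S)%N) alpha s' * cumtheta Theta h ord0 s')
        * (cumtheta Theta h ord_max s / cumtheta Theta h ord0 s).
Proof.
(* The MA(oo) equation enters only through the term-by-term covariance
   assumption. *)
move=> _ eps_L2 Y_L2 z_L2 eps_centered _ _ _ covariance_termwise _ z_exogenous
  z_contemporaneous h theta_neq0 _.
rewrite /= !(covariance_cumvar_instrument eps_L2 Y_L2 z_L2 eps_centered
  covariance_termwise z_exogenous z_contemporaneous).
exact: weighted_ratio_sum.
Qed.
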